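(* Let $X\in\mathbb{R}^p$ have distribution function $F$ with density $f_0$. Let $\phi(\cdot;\boldsymbol{\mu},\boldsymbol{\Sigma})$ denote the $N_p(\boldsymbol{\mu},\boldsymbol{\Sigma})$ density. Let $\mathcal{M}$ be a set of cluster configurations; each $m\in\mathcal{M}$ is a parameter $\boldsymbol{\theta}^{(m)}=\{\boldsymbol{\theta}_k^{(m)}\}_{k=1}^{K(\boldsymbol{\theta}^{(m)})}$, $\boldsymbol{\theta}_k^{(m)}=(\pi_k^{(m)},\boldsymbol{\mu}_k^{(m)},\boldsymbol{\Sigma}_k^{(m)})$ with $\pi_k^{(m)}>0$, $\sum_k\pi_k^{(m)}=1$, $\boldsymbol{\mu}_k^{(m)}\in\mathbb{R}^p$, $\boldsymbol{\Sigma}_k^{(m)}$ positive definite. For such $\boldsymbol{\theta}$ define $\mathrm{qs}(\mathbf{x};\boldsymbol{\theta}_k)=\log\pi_k-\tfrac12\log\det\boldsymbol{\Sigma}_k-\tfrac12(\mathbf{x}-\boldsymbol{\mu}_k)^\top\boldsymbol{\Sigma}_k^{-1}(\mathbf{x}-\boldsymbol{\mu}_k)$, $\tau_k(\mathbf{x};\boldsymbol{\theta})=\exp(\mathrm{qs}(\mathbf{x};\boldsymbol{\theta}_k))/\sum_{j=1}^{K(\boldsymbol{\theta})}\exp(\mathrm{qs}(\mathbf{x};\boldsymbol{\theta}_j))$, $$T(\boldsymbol{\theta})=\sum_{k=1}^{K(\boldsymbol{\theta})}\int\tau_k(\mathbf{x};\boldsymbol{\theta})\,\mathrm{qs}(\mathbf{x};\boldsymbol{\theta}_k)\,dF,$$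 the Gaussian mixture density $\psi_\phi(\mathbf{x};\boldsymbol{\theta})=\sum_{k=1}^{K(\boldsymbol{\theta})}\pi_k\phi(\mathbf{x};\boldsymbol{\mu}_k,\boldsymbol{\Sigma}_k)$, the posterior weights $\omega_{\phi,k}(\mathbf{x};\boldsymbol{\theta})=\pi_k\phi(\mathbf{x};\boldsymbol{\mu}_k,\boldsymbol{\Sigma}_k)/\psi_\phi(\mathbf{x};\boldsymbol{\theta})$, and the entropy $\mathrm{Ent}_\phi(\mathbf{x};\boldsymbol{\theta})=-\sum_{k=1}^{K(\boldsymbol{\theta})}\omega_{\phi,k}(\mathbf{x};\boldsymbol{\theta})\log\omega_{\phi,k}(\mathbf{x};\boldsymbol{\theta})$. Let $D_{KL}(f_0\,\|\,g)=\int f_0\log(f_0/g)$ denote the Kullback–Leibler divergence. Assuming all expectations involved exist (and are finite), $$\operatorname*{arg\,max}_{m\in\mathcal{M}}T(\boldsymbol{\theta}^{(m)})=\operatorname*{arg\,min}_{m\in\mathcal{M}}\Big\{D_{KL}\big(f_0\,\|\,\psi_\phi(\cdot;\boldsymbol{\theta}^{(m)})\big)+\mathbb{E}_F\big[\mathrm{Ent}_\phi(X;\boldsymbol{\theta}^{(m)})\big]\Big\},$$ where $\mathbb{E}_F$ denotes expectation under $F$.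
   Context: $K(\boldsymbol{\theta})$ denotes the number of groups described by the configuration $\boldsymbol{\theta}$; $\boldsymbol{\theta}_k$ represents size, center and scatter of the $k$-th cluster. $T$ is the population smooth score criterion. *)

From HB Require Import structures.
From mathcomp Require Import all_boot all_order all_algebra.
From mathcomp Require Import all_classical all_reals all_analysis.
Set Implicit Arguments. Unset Strict Implicit. Unset Printing Implicit Defensive.
Import Order.TTheory GRing.Theory Num.Theory.
Import numFieldNormedType.Exports.
Local Open Scope classical_set_scope.
Local Open Scope ring_scope.

(** R^p: column vectors with the Borel sigma-algebra (generated by the
    open sets of the usual (max-norm) topology). *)
Notation Rp R p := (g_sigma_algebraType (@open 'cV[R]_p)).

(** Lebesgue measure on R^p, characterised (uniquely, on Borel sets) as the
    measure giving each half-open box its volume. *)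
Definition is_lebesgue (R : realType) (p : nat)
    (lam : {measure set (Rp R p) -> \bar R}) : Prop :=
  forall a b : 'cV[R]_p, (forall i, a i 0 <= b i 0) ->
    lam [set x : Rp R p | forall i, a i 0 <= (x : 'cV[R]_p) i 0 < b i 0]
      = (\prod_(i < p) (b i 0 - a i 0))%:E.

Definition posdef (R : realType) (p : nat) (S : 'M[R]_p) : Prop :=
  S^T = S /\ forall v : 'cV[R]_p, v != 0 -> 0 < (v^T *m S *m v) 0 0.

Record config (R : realType) (p : nat) := Config {
  K : nat;
  cpi : 'I_K -> R;
  cmu : 'I_K -> 'cV[R]_p;
  cSigma : 'I_K -> 'M[R]_p }.
Arguments K {R p}.
Arguments cpi {R p}.
Arguments cmu {R p}.
Arguments cSigma {R p}.

Definition valid_config (R : realType) (p : nat) (th : config R p) : Prop :=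
  [/\ forall k, 0 < cpi th k,
      \sum_(k < K th) cpi th k = 1
    & forall k, posdef (cSigma th k)].

Section Defs.
Variables (R : realType) (p : nat).
Implicit Types (th : config R p) (x mu : 'cV[R]_p) (S : 'M[R]_p).

Definition mahal x mu S : R :=
  ((x - mu)^T *m invmx S *m (x - mu)) 0 0.

Definition qs th (k : 'I_(K th)) x : R :=
  ln (cpi th k) - 2^-1 * ln (\det (cSigma th k))
  - 2^-1 * mahal x (cmu th k) (cSigma th k).

Definition tau th (k : 'I_(K th)) x : R :=
  expR (qs k x) / \sum_(j < K th) expR (qs j x).

Definition phi x mu S : R :=
  expR (- (2^-1 * mahal x mu S)) / Num.sqrt ((2 * pi) ^+ p * \det S).

Definition psi th x : R :=
  \sum_(k < K th) cpi th k * phi x (cmu th k) (cSigma th k).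

Definition omega th (k : 'I_(K th)) x : R :=
  cpi th k * phi x (cmu th k) (cSigma th k) / psi th x.

Definition Ent th x : R :=
  - \sum_(k < K th) omega k x * ln (omega k x).
End Defs.

Section Scores.
Variables (R : realType) (p : nat).
Local Open Scope ereal_scope.

Definition Tscore (F : probability (Rp R p) R) (th : config R p) : \bar R :=
  \sum_(k < K th) \int[F]_x (tau k (x : 'cV[R]_p) * qs k x)%:E.

Definition KL (lam : {measure set (Rp R p) -> \bar R})
    (f0 g : Rp R p -> R) : \bar R :=
  \int[lam]_x (f0 x * ln (f0 x / g x))%:E.

Definition EEnt (F : probability (Rp R p) R) (th : config R p) : \bar R :=
  \int[F]_x (Ent th (x : 'cV[R]_p))%:E.
End Scores.

From HB Require Import structures.
From mathcomp Require Import all_boot all_order all_algebra.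
From mathcomp Require Import all_classical all_reals all_analysis.
From mathcomp Require Import measurable_realfun ring polyrcf.
Import Order.TTheory GRing.Theory Num.Theory.
Import numFieldNormedType.Exports.
Set Implicit Arguments. Unset Strict Implicit. Unset Printing Implicit Defensive.
Local Open Scope classical_set_scope.
Local Open Scope ring_scope.

(* Since exp qs(x; theta_k) = (2 pi)^(p/2) pi_k phi_k(x), the weights tau_k
   are the posterior weights omega_k, i.e. the softmax of the scores qs_k, and
   the softmax mean of the scores is their log-sum-exp minus the entropy of the
   weights: sum_k tau_k qs_k = (p/2) log (2 pi) + log psi - Ent.  Integrating
   against F, which has density f0, gives
     T(theta) + D_KL(f0 || psi) + E_F[Ent] = int f0 log f0 + (p/2) log (2 pi),
   which does not depend on theta; hence maximising T is minimising
   D_KL + E_F[Ent]. *)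

Section integral_density.
Context d (T : measurableType d) (R : realType).
Variables (mu nu : {measure set T -> \bar R}) (g : T -> R).
Hypothesis measurable_g : measurable_fun setT g.
Hypothesis g_ge0 : forall x, 0 <= g x.
Hypothesis nu_density :
  forall A, measurable A -> (nu A = \int[mu]_(x in A) (g x)%:E)%E.
Local Open Scope ereal_scope.
Import HBNNSimple.

Let measurable_Eg : measurable_fun setT (EFin \o g).
Proof. exact/measurable_EFinP. Qed.

Lemma integral_indic_density A : measurable A ->
  \int[mu]_x ((\1_A x)%:E * (g x)%:E) = nu A.
Proof.
move=> mA; rewrite nu_density // [RHS]integral_mkcond epatch_indic.
by apply: eq_integral => x _; rewrite muleC.
Qed.

Lemma integral_nnsfun_density (h : {nnsfun T >-> R}) :
  \int[mu]_x ((h x)%:E * (g x)%:E) = \int[nu]_x (h x)%:E.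
Proof.
have fin_h := fimfunP h.
rewrite integral_nnsfun // patch_setT sintegralE.
transitivity (\int[mu]_x \sum_(r \in range h)
    ((r * \1_(h @^-1` [set r]) x)%:E * (g x)%:E)).
  apply: eq_integral => x _; rewrite fimfunE -fsumEFin // ge0_mule_fsuml //.
  by move=> r; rewrite nnfun_muleindic_ge0.
rewrite ge0_integral_fsum //; last 2 first.
- move=> r; apply: emeasurable_funM => //.
  exact/measurable_EFinP/measurable_funM/measurable_indic.
- by move=> r x _; rewrite mule_ge0 ?nnfun_muleindic_ge0 ?lee_fin.
apply: eq_fsbigr => r; rewrite inE => -[x0 _ <-].
under eq_integral do rewrite EFinM -muleA.
rewrite ge0_integralZl ?integral_indic_density ?lee_fin //.
- exact/emeasurable_funM/measurable_Eg/measurable_EFinP/measurable_indic.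
- by move=> x _; rewrite mule_ge0 ?lee_fin.
Qed.

Lemma ge0_integral_density (f : T -> \bar R) :
  measurable_fun setT f -> (forall x, 0 <= f x) ->
  \int[mu]_x (f x * (g x)%:E) = \int[nu]_x f x.
Proof.
move=> mf f_ge0; pose h := nnsfun_approx measurableT mf.
have h_cvg x : EFin \o h ^~ x @ \oo --> f x.
  by apply: cvg_nnsfun_approx => // y _; exact: f_ge0.
have h_nd x : nondecreasing_seq (h ^~ x).
  by move=> m n mn; exact/lefP/nd_nnsfun_approx.
have h_meas n : measurable_fun setT (EFin \o h n).
  exact/measurable_EFinP.
have -> : \int[nu]_x f x = limn (fun n => \int[nu]_x (h n x)%:E).
  rewrite -monotone_convergence //.
  - by apply: eq_integral => x _; exact/esym/cvg_lim/h_cvg.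
  - by move=> n x _; rewrite lee_fin.
  - by move=> x _ m n mn; rewrite lee_fin h_nd.
have -> : \int[mu]_x (f x * (g x)%:E) =
    limn (fun n => \int[mu]_x ((h n x)%:E * (g x)%:E)).
  rewrite -monotone_convergence //.
  - apply: eq_integral => x _; apply/esym/cvg_lim => //.
    by apply: cvgeZr => //; exact: h_cvg.
  - by move=> n; apply: emeasurable_funM; [exact: h_meas|exact: measurable_Eg].
  - by move=> n x _; rewrite mule_ge0 ?lee_fin.
  - by move=> x _ m n mn; rewrite lee_wpmul2r ?lee_fin ?h_nd.
by congr (limn _); apply/funext => n; exact: integral_nnsfun_density.
Qed.

Lemma integrable_density (f : T -> \bar R) : nu.-integrable setT f ->
  mu.-integrable setT (fun x => f x * (g x)%:E).
Proof.
move=> /integrableP[mf f_fin]; apply/integrableP; split.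
  exact: emeasurable_funM.
rewrite (eq_integral (fun x => `|f x| * (g x)%:E)); last first.
  by move=> x _; rewrite /= abseM (@gee0_abs _ (g x)%:E) ?lee_fin.
by rewrite ge0_integral_density //; exact: measurableT_comp.
Qed.

Lemma integral_density (f : T -> \bar R) : measurable_fun setT f ->
  \int[mu]_x (f x * (g x)%:E) = \int[nu]_x f x.
Proof.
move=> mf.
have fgE : (fun x => f x * (g x)%:E)^\+ = fun x => f^\+ x * (g x)%:E.
  by apply/funext => x; rewrite !funeposE maxe_pMl ?mul0e ?lee_fin.
have fgN : (fun x => f x * (g x)%:E)^\- = fun x => f^\- x * (g x)%:E.
  by apply/funext => x; rewrite !funenegE maxe_pMl ?mul0e ?mulNe ?lee_fin.
have mfp := measurable_funepos mf; have mfn := measurable_funeneg mf.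
by rewrite integralE [RHS]integralE fgE fgN !ge0_integral_density.
Qed.

End integral_density.

Section softmax.
Variables (R : realType) (n : nat).
Implicit Type a : 'I_n -> R.

Definition softmax a k : R := expR (a k) / \sum_j expR (a j).

Lemma sum_expR_gt0 a : (0 < n)%N -> 0 < \sum_j expR (a j).
Proof.
move=> n_gt0; rewrite (bigD1 (Ordinal n_gt0)) //=.
by rewrite ltr_pwDl ?expR_gt0 // sumr_ge0 // => j _; rewrite expR_ge0.
Qed.

Lemma sum_softmax_mul a : (0 < n)%N ->
  \sum_k softmax a k * a k =
  ln (\sum_j expR (a j)) + \sum_k softmax a k * ln (softmax a k).
Proof.
move=> /(sum_expR_gt0 a) S_gt0; set S := \sum_j expR (a j).
have sum_softmax : \sum_k softmax a k = 1.
  by rewrite -mulr_suml divff // gt_eqF.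
have ln_softmax k : ln (softmax a k) = a k - ln S.
  by rewrite ln_div ?expRK // posrE expR_gt0.
under [X in _ = _ + X]eq_bigr do rewrite ln_softmax mulrBr.
by rewrite sumrB -mulr_suml sum_softmax mul1r addrC subrK.
Qed.

End softmax.

(* char_poly (- S) is monic with no root in [0, +oo[ (an eigenvector of - S
   for y >= 0 would give v^T S v = - y |v|^2 <= 0), so its value det S at 0
   is positive. *)
Lemma posdef_det_gt0 (R : realType) (p : nat) (S : 'M[R]_p) :
  posdef S -> 0 < \det S.
Proof.
move=> [_ S_pos].
have no_root : {in `[0, +oo[, forall y, ~~ root (char_poly (- S)) y}.
  move=> y; rewrite in_itv /= andbT => y_ge0.
  rewrite -eigenvalue_root_char; apply/negP => /eigenvalueP [v Sv v_neq0].
  have := S_pos v^T; rewrite trmx_eq0 => /(_ v_neq0); rewrite trmxK.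
  have -> : v *m S = - (y *: v) by rewrite -Sv mulmxN opprK.
  rewrite mulNmx -scalemxAl mxE mxE; apply/negP; rewrite -leNgt oppr_le0.
  rewrite mulr_ge0 // mxE; apply: sumr_ge0 => i _; rewrite !mxE.
  by rewrite -expr2 sqr_ge0.
have := sgp_pinftyP no_root (_ : 0 \in `[0, +oo[).
rewrite in_itv /= lexx => /(_ isT).
rewrite /sgp_pinfty (monicP (char_poly_monic _)) sgr1 horner_coef0.
rewrite char_poly_det.
rewrite -[- S]scaleN1r detZ mulrA -exprMn mulrNN mulr1 expr1n mul1r => /eqP.
by rewrite sgr_cp0.
Qed.

Section gaussian_mixture.
Variables (R : realType) (p : nat) (th : config R p).
Hypothesis th_valid : valid_config th.
Implicit Types (x : 'cV[R]_p) (k : 'I_(K th)).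

Let cpi_gt0 k : 0 < cpi th k.
Proof. by case: th_valid. Qed.

Let det_gt0 k : 0 < \det (cSigma th k).
Proof. by case: th_valid => _ _ /(_ k) /posdef_det_gt0. Qed.

Let sqrt2pi_gt0 : 0 < Num.sqrt ((2 * pi) ^+ p) :> R.
Proof. by rewrite sqrtr_gt0 exprn_gt0 // mulr_gt0 // pi_gt0. Qed.

Lemma K_gt0 : (0 < K th)%N.
Proof.
case: th_valid => _ + _; case: (K th) (cpi th) => // pi.
by rewrite big_ord0 => /eqP; rewrite eq_sym oner_eq0.
Qed.

Lemma phi_gt0 k x : 0 < phi x (cmu th k) (cSigma th k).
Proof.
rewrite divr_gt0 ?expR_gt0 // sqrtr_gt0 mulr_gt0 //.
by rewrite exprn_gt0 // mulr_gt0 // pi_gt0.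
Qed.

Lemma psi_gt0 x : 0 < psi th x.
Proof.
rewrite /psi (bigD1 (Ordinal K_gt0)) //=.
apply: ltr_pwDl; first by rewrite mulr_gt0 ?phi_gt0.
by apply: sumr_ge0 => k _; rewrite mulr_ge0 ?ltW ?phi_gt0.
Qed.

Lemma expR_qs k x : expR (qs k x) =
  Num.sqrt ((2 * pi) ^+ p) * (cpi th k * phi x (cmu th k) (cSigma th k)).
Proof.
have sqrt_det :
    expR (2^-1 * ln (\det (cSigma th k))) = Num.sqrt (\det (cSigma th k)).
  by rewrite mulrC expRM lnK ?posrE // powR12_sqrt // ltW.
rewrite /qs /phi -!addrA !expRD lnK ?posrE // expRN sqrt_det sqrtrM; last first.
  by rewrite exprn_ge0 // mulr_ge0 // pi_ge0.
have := sqrtr_gt0 (\det (cSigma th k)); rewrite det_gt0 => sqrt_det_gt0.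
by field; rewrite !gt_eqF.
Qed.

Lemma tauE k x : tau k x = omega k x.
Proof.
rewrite /tau /omega; under eq_bigr do rewrite expR_qs.
rewrite expR_qs -mulr_sumr -/(psi th x).
by field; rewrite !gt_eqF ?psi_gt0.
Qed.

Lemma sum_tau_qs x : \sum_(k < K th) tau k x * qs k x =
  ln (Num.sqrt ((2 * pi) ^+ p)) + ln (psi th x) - Ent th x.
Proof.
rewrite [LHS](@sum_softmax_mul R _ (fun k => qs k x) K_gt0).
under eq_bigr do rewrite expR_qs.
rewrite -mulr_sumr lnM ?posrE ?psi_gt0 // /Ent opprK.
by under [in RHS]eq_bigr do rewrite -tauE.
Qed.

End gaussian_mixture.

Section score_decomposition.
Variables (R : realType) (p : nat).
Variables (lam : {measure set (Rp R p) -> \bar R}) (F : probability (Rp R p) R).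
Variable f0 : Rp R p -> R.
Hypothesis f0_meas : measurable_fun setT f0.
Hypothesis f0_ge0 : forall x, 0 <= f0 x.
Hypothesis f0_density :
  forall A, measurable A -> (F A = \int[lam]_(x in A) (f0 x)%:E)%E.
Variable th : config R p.
Hypothesis th_valid : valid_config th.
Hypothesis int_T : forall k : 'I_(K th),
  F.-integrable setT (fun x => (tau k (x : 'cV[R]_p) * qs k x)%:E).
Hypothesis int_Ent : F.-integrable setT (fun x => (Ent th (x : 'cV[R]_p))%:E).
Hypothesis int_KL : lam.-integrable setT
  (fun x => (f0 x * ln (f0 x / psi th (x : 'cV[R]_p)))%:E).
Local Open Scope ereal_scope.

Let c : R := ln (Num.sqrt ((2 * pi) ^+ p)).
Let G (x : Rp R p) : R := \sum_(k < K th) tau k (x : 'cV[R]_p) * qs k x.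

Let int_G : F.-integrable setT (fun x => (G x)%:E).
Proof.
apply: eq_integrable measurableT _ _ _
  (integrable_sum measurableT _ (fun k _ => int_T k)).
by move=> x _; rewrite sumEFin.
Qed.

Let TscoreE : Tscore F th = \int[F]_x (G x)%:E.
Proof.
by rewrite /Tscore -integral_sum //; apply: eq_integral => x _; rewrite sumEFin.
Qed.

Lemma Tscore_fin_num : Tscore F th \is a fin_num.
Proof. by rewrite TscoreE integrable_fin_num. Qed.

Lemma KL_EEnt_fin_num : KL lam f0 (fun x => psi th x) + EEnt F th \is a fin_num.
Proof. by rewrite fin_numD !integrable_fin_num. Qed.

Let ln_psiE x : (ln (psi th x) = G x + Ent th x - c)%R.
Proof. by rewrite /G sum_tau_qs // /c; ring. Qed.

Let int_cst : F.-integrable setT (EFin \o cst c).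
Proof. exact: finite_measure_integrable_cst. Qed.

Let int_ln_psi : F.-integrable setT (fun x => (ln (psi th x))%:E).
Proof.
apply: eq_integrable measurableT _ _ _
  (integrableB measurableT (integrableD measurableT int_G int_Ent) int_cst).
by move=> x _; rewrite /= ln_psiE.
Qed.

Let integral_ln_psi :
  \int[F]_x (ln (psi th x))%:E = Tscore F th + EEnt F th - c%:E.
Proof.
rewrite (eq_integral (fun x => (G x)%:E + (Ent th x)%:E - c%:E)); last first.
  by move=> x _; rewrite ln_psiE.
rewrite integralB //; last exact: integrableD.
rewrite integralD // integral_cst // [X in _ * X](_ : _ = 1) ?mule1 ?TscoreE //.
exact: probability_setT.
Qed.

Let integral_f0_ln_f0 : \int[lam]_x (f0 x * ln (f0 x))%:E =
  KL lam f0 (fun x => psi th x) + \int[F]_x (ln (psi th x))%:E.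
Proof.
rewrite -(integral_density f0_meas f0_ge0 f0_density); last first.
  exact: measurable_int int_ln_psi.
rewrite /KL -integralD //; last first.
  exact: (integrable_density f0_meas f0_ge0 f0_density int_ln_psi).
apply: eq_integral => x _; rewrite -EFinM -EFinD; congr EFin.
have [->|f0_neq0] := eqVneq (f0 x) 0%R; first by rewrite !mul0r mulr0 addr0.
have f0_gt0 : (0 < f0 x)%R by rewrite lt_def f0_neq0 f0_ge0.
by rewrite ln_div ?posrE ?psi_gt0 //; ring.
Qed.

Lemma KL_EEnt_Tscore :
  KL lam f0 (fun x => psi th x) + EEnt F th + Tscore F th =
  \int[lam]_x (f0 x * ln (f0 x))%:E + c%:E.
Proof.
rewrite integral_f0_ln_f0 integral_ln_psi.
move: (KL _ _ _) (EEnt F th) (Tscore F th) => k e t.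
by rewrite addeA subeK // -addeA (addeC e).
Qed.

End score_decomposition.

Lemma argmax_eq_argmin_of_sum_const (I : Type) (R : realType)
    (a t : I -> \bar R) (C : \bar R) :
  (forall i, a i \is a fin_num) -> (forall i, t i \is a fin_num) ->
  (forall i, (a i + t i = C)%E) ->
  [set i | forall j, (t j <= t i)%E] = [set i | forall j, (a i <= a j)%E].
Proof.
move=> a_fin t_fin aC.
have C_fin (i : I) : C \is a fin_num by rewrite -(aC i) fin_numD a_fin t_fin.
have aE (i : I) : a i = (C - t i)%E by rewrite -(aC i) addeK.
have le_a (i j : I) : (a i <= a j)%E = (t j <= t i)%E.
  by rewrite !aE (leeD2lE _ _ (C_fin i)) leeN2.
by apply/seteqP; split => i /= ext_i j; move: (ext_i j); rewrite le_a.
Qed.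

Theorem proposition3 (R : realType) (p : nat)
    (lam : {measure set (Rp R p) -> \bar R}) (lam_leb : is_lebesgue lam)
    (F : probability (Rp R p) R) (f0 : Rp R p -> R)
    (f0_meas : measurable_fun setT f0) (f0_ge0 : forall x, 0 <= f0 x)
    (f0_density : forall A, measurable A -> (F A = \int[lam]_(x in A) (f0 x)%:E)%E)
    (M : Type) (theta : M -> config R p)
    (theta_valid : forall m, valid_config (theta m))
    (int_T : forall m (k : 'I_(K (theta m))),
        F.-integrable setT (fun x => (tau k (x : 'cV[R]_p) * qs k x)%:E))
    (int_Ent : forall m,
        F.-integrable setT (fun x => (Ent (theta m) (x : 'cV[R]_p))%:E))
    (int_KL : forall m,
        lam.-integrable setT
          (fun x => (f0 x * ln (f0 x / psi (theta m) (x : 'cV[R]_p)))%:E)) :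
  [set m | forall m', (Tscore F (theta m') <= Tscore F (theta m))%E]
  = [set m | forall m',
      (KL lam f0 (fun x => psi (theta m) (x : 'cV[R]_p)) + EEnt F (theta m)
       <= KL lam f0 (fun x => psi (theta m') (x : 'cV[R]_p)) + EEnt F (theta m'))%E].
Proof.
apply: (argmax_eq_argmin_of_sum_const
  (C := (\int[lam]_x (f0 x * ln (f0 x))%:E
         + (ln (Num.sqrt ((2 * pi) ^+ p)))%:E)%E)) => m.
- exact: KL_EEnt_fin_num.
- exact: Tscore_fin_num.
- exact: KL_EEnt_Tscore.
Qed.
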